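(* Fix a representative set $\bar{\mathcal A}$. For any stable semi-private policy $\sigma:\Omega\to\Delta(\mathcal A\times G)$ there exists a stable semi-private policy $\tilde\sigma:\Omega\to\Delta(\bar{\mathcal A}\times\widetilde G)$, for some set $\widetilde G$ of private-information tuples, such that $u_0(\tilde\sigma)\ge u_0(\sigma)$ (in fact equality holds).
   Context: A persuasion instance consists of: a finite set $\Omega$ of worlds; a prior $\mu\in\Delta(\Omega)$; agents $N=\{1,\dots,n\}$; a finite action set $A$; a partition $\mathcal T$ of $N$ into nonempty sets called types; for each $T\in\mathcal T$ a utility $u_T(a,\rho\mid\omega)\in\mathbb R$ defined for $a\in A$, action profiles $\rho$, and $\omega\in\Omega$; a principal utility $u_0(\rho\mid\omega)\in\mathbb R$; and an integer $d\ge 1$ (maximum coalition size). Joint actions are $\mathbf a\in\mathcal A=A^n$; the action profile of $\mathbf a$ is $\rho_{\mathbf a}:\mathcal T\times A\to\mathbb Z_{\ge0}$, $\rho_{\mathbf a}(T,a)=|\{i\in T:a_i=a\}|$. For $i\in T$, $u_i(\mathbf a\mid\omega)=u_T(a_i,\rho_{\mathbf a}\mid\omega)$. A policy is a map $\sigma:\Omega\to\Delta(\mathcal A\times G)$ (finitely supported distributions), where $G$ is a set of tuples $\mathbf g=(g_i)_{i\in N}$; elements $s=(\mathbf a,\mathbf g)$ are meta-signals. In the semi-private mode agent $i$ observes $s_i=(\mathbf a,g_i)$. Agent $i$'s posterior upon observing $s_i$ is $\Pr(\tilde{\mathbf a},\omega\mid s_i)=\mu(\omega)\,\sigma(\{s'=(\tilde{\mathbf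 a},\mathbf g'):s'_i=s_i\}\mid\omega)\big/\sum_{\omega'}\mu(\omega')\,\sigma(\{s':s'_i=s_i\}\mid\omega')$. A meta-signal $s$ is unstable if there exist a nonempty $N'\subseteq N$ with $|N'|\le d$ and actions $(a'_i)_{i\in N'}$ such that for every $i\in N'$: $\sum_{\tilde{\mathbf a},\omega}\Pr(\tilde{\mathbf a},\omega\mid s_i)\,\big(u_i(\tilde{\mathbf a}\oplus\mathbf a'\mid\omega)-u_i(\tilde{\mathbf a}\mid\omega)\big)>0$, where $\tilde{\mathbf a}\oplus\mathbf a'$ replaces $\tilde a_i$ by $a'_i$ for all $i\in N'$; otherwise $s$ is stable. A policy is stable if every meta-signal it sends with positive probability is stable. The principal's utility is $u_0(\sigma)=\sum_\omega\mu(\omega)\sum_{(\mathbf a,\mathbf g)}\sigma((\mathbf a,\mathbf g)\mid\omega)\,u_0(\rho_{\mathbf a}\mid\omega)$. A representative set $\bar{\mathcal A}\subseteq\mathcal A$ contains, for each action profile $\rho$ realizable by some joint action, exactly one $\bar{\mathbf a}$ with $\rho_{\bar{\mathbf a}}=\rho$. *)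

From HB Require Import structures.
From mathcomp Require Export all_boot all_order all_algebra.
Set Implicit Arguments. Unset Strict Implicit. Unset Printing Implicit Defensive.
Import Order.TTheory GRing.Theory Num.Theory.
Local Open Scope ring_scope.

(* Agents are 'I_n; joint actions are {ffun 'I_n -> A}; types are given by a
   map tp : 'I_n -> T (the partition of N into the fibers of tp);
   action profiles are {ffun T * A -> nat}. *)

Definition prof (n : nat) (A T : finType) (tp : 'I_n -> T)
  (a : {ffun 'I_n -> A}) : {ffun T * A -> nat} :=
  [ffun ta => #|[set i : 'I_n | (tp i == ta.1) && (a i == ta.2)]|].

Definition util (R : realFieldType) (n : nat) (Omega A T : finType)
  (tp : 'I_n -> T) (u : T -> A -> {ffun T * A -> nat} -> Omega -> R)
  (i : 'I_n) (a : {ffun 'I_n -> A}) (w : Omega) : R :=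
  u (tp i) (a i) (prof tp a) w.

Definition replace (n : nat) (A : finType) (a : {ffun 'I_n -> A})
  (Np : {set 'I_n}) (a' : {ffun 'I_n -> A}) : {ffun 'I_n -> A} :=
  [ffun j => if j \in Np then a' j else a j].

Definition is_prior (R : realFieldType) (Omega : finType) (mu : Omega -> R) :=
  (forall w, 0 <= mu w) /\ \sum_w mu w = 1.

Definition fsdist (R : realFieldType) (X : eqType) (p : X -> R) (s : seq X) :=
  [/\ uniq s, forall x, 0 <= p x, forall x, p x != 0 -> x \in s
    & \sum_(x <- s) p x = 1].

Notation msig n A S := ({ffun 'I_n -> A} * {ffun 'I_n -> S})%type.

Definition policy (R : realFieldType) (Omega : finType) (n : nat) (A : finType)
  (S : eqType) (sigma : Omega -> msig n A S -> R) (supp : seq (msig n A S)) :=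
  forall w, fsdist (sigma w) supp.

(* Semi-private mode: agent i observes s_i = (a, g_i).
   Pr(at, w | s_i) = mu(w) sigma({s' = (at, g') : s'_i = s_i} | w) /
                     sum_w' mu(w') sigma({s' : s'_i = s_i} | w') *)
Definition posterior (R : realFieldType) (Omega : finType) (n : nat)
  (A : finType) (S : eqType) (mu : Omega -> R)
  (sigma : Omega -> msig n A S -> R) (supp : seq (msig n A S))
  (i : 'I_n) (s : msig n A S) (at_ : {ffun 'I_n -> A}) (w : Omega) : R :=
  mu w * (\sum_(s' <- supp | [&& s'.1 == at_, s'.1 == s.1 & s'.2 i == s.2 i])
            sigma w s')
  / (\sum_w' mu w' * \sum_(s' <- supp | (s'.1 == s.1) && (s'.2 i == s.2 i))
            sigma w' s').

Definition unstable (R : realFieldType) (Omega : finType) (n : nat)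
  (A T : finType) (S : eqType) (tp : 'I_n -> T)
  (u : T -> A -> {ffun T * A -> nat} -> Omega -> R) (mu : Omega -> R)
  (d : nat) (sigma : Omega -> msig n A S -> R) (supp : seq (msig n A S))
  (s : msig n A S) : Prop :=
  exists (Np : {set 'I_n}) (a' : {ffun 'I_n -> A}),
    [/\ Np != set0, (#|Np| <= d)%N &
      forall i, i \in Np ->
        0 < \sum_(at_ : {ffun 'I_n -> A}) \sum_(w : Omega)
              posterior mu sigma supp i s at_ w
              * (util tp u i (replace at_ Np a') w - util tp u i at_ w)].

Definition stable (R : realFieldType) (Omega : finType) (n : nat)
  (A T : finType) (S : eqType) (tp : 'I_n -> T)
  (u : T -> A -> {ffun T * A -> nat} -> Omega -> R) (mu : Omega -> R)
  (d : nat) (sigma : Omega -> msig n A S -> R) (supp : seq (msig n A S))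
  (s : msig n A S) : Prop :=
  ~ unstable tp u mu d sigma supp s.

Definition stable_policy (R : realFieldType) (Omega : finType) (n : nat)
  (A T : finType) (S : eqType) (tp : 'I_n -> T)
  (u : T -> A -> {ffun T * A -> nat} -> Omega -> R) (mu : Omega -> R)
  (d : nat) (sigma : Omega -> msig n A S -> R) (supp : seq (msig n A S)) :=
  forall s, s \in supp -> 0 < \sum_w mu w * sigma w s ->
    stable tp u mu d sigma supp s.

Definition principal_util (R : realFieldType) (Omega : finType) (n : nat)
  (A T : finType) (S : eqType) (tp : 'I_n -> T)
  (u0 : {ffun T * A -> nat} -> Omega -> R) (mu : Omega -> R)
  (sigma : Omega -> msig n A S -> R) (supp : seq (msig n A S)) : R :=
  \sum_w mu w * \sum_(s <- supp) sigma w s * u0 (prof tp s.1) w.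

Definition representative (n : nat) (A T : finType) (tp : 'I_n -> T)
  (Abar : {set {ffun 'I_n -> A}}) :=
  forall a : {ffun 'I_n -> A}, #|[set b in Abar | prof tp b == prof tp a]| = 1%N.

From mathcomp Require Import all_boot all_order all_algebra fingroup perm.
Import Order.TTheory GRing.Theory Num.Theory.
Set Implicit Arguments. Unset Strict Implicit. Unset Printing Implicit Defensive.
Local Open Scope ring_scope.

(* Replace each signalled joint action [a] by the representative [rep a] of its
   profile, moving agents along a type-preserving permutation [p] with
   [rep a (p i) = a i], and append [a] to every private signal.  Utilities
   depend only on an agent's type, its action and the profile, all of which
   [p] preserves, so agent [p i] of the new policy has the same posterior and
   the same deviation gains as agent [i] of the old one: a profitable
   coalition deviation for the new policy pulls back along [p] to one for the
   old policy.  The principal's utility depends only on the profile, hence is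
   unchanged. *)

Lemma count_enum_card (X : finType) (P : pred X) : count P (enum X) = #|P|.
Proof. by rewrite enumT cardE /enum_mem size_filter. Qed.

Section TypePreservingPermutations.

Variables (n : nat) (A T : finType) (tp : 'I_n -> T).

Lemma prof_perm (p : {perm 'I_n}) (c : {ffun 'I_n -> A}) :
  (forall i, tp (p i) = tp i) -> prof tp [ffun i => c (p i)] = prof tp c.
Proof.
move=> tp_p; apply/ffunP => ta; rewrite !ffunE.
rewrite -[RHS](card_preimset _ (@perm_inj _ p)); apply: eq_card => i.
by rewrite !inE ffunE tp_p.
Qed.

Lemma util_perm (R : realFieldType) (Omega : finType)
    (u : T -> A -> {ffun T * A -> nat} -> Omega -> R)
    (p : {perm 'I_n}) (c : {ffun 'I_n -> A}) i w :
  (forall i, tp (p i) = tp i) ->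
  util tp u (p i) c w = util tp u i [ffun k => c (p k)] w.
Proof. by move=> tp_p; rewrite /util prof_perm // tp_p ffunE. Qed.

Lemma replace_perm (p : {perm 'I_n}) (c a' : {ffun 'I_n -> A}) Np :
  [ffun k => replace c Np a' (p k)]
  = replace [ffun k => c (p k)] (p @^-1: Np) [ffun k => a' (p k)].
Proof. by apply/ffunP => k; rewrite !ffunE inE. Qed.

Lemma prof_eq_perm (a b : {ffun 'I_n -> A}) :
  prof tp a = prof tp b ->
  exists2 p : {perm 'I_n}, forall i, tp (p i) = tp i & a = [ffun i => b (p i)].
Proof.
move=> eq_ab; pose key (c : {ffun 'I_n -> A}) (i : 'I_n) := (tp i, c i).
have count_key c x : count_mem x [tuple key c i | i < n] = prof tp c x.
  rewrite count_map count_enum_card ffunE cardsE; apply: eq_card => i.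
  by case: x => t y; rewrite !inE /key /= xpair_eqE.
have : perm_eq [tuple key a i | i < n] [tuple key b i | i < n].
  by apply/allP => x _; rewrite /= !count_key eq_ab.
case/tuple_permP => p /val_inj key_ab.
have key_abi i : (tp i, a i) = (tp (p i), b (p i)).
  by have := congr1 (fun t => tnth t i) key_ab; rewrite !tnth_mktuple.
exists p => [i | ]; first by case: (key_abi i).
by apply/ffunP => i; rewrite ffunE; case: (key_abi i).
Qed.

End TypePreservingPermutations.

Section Representatives.

Variables (n : nat) (A T : finType) (tp : 'I_n -> T).
Variable Abar : {set {ffun 'I_n -> A}}.
Hypothesis Abar_rep : representative tp Abar.

Definition rep (a : {ffun 'I_n -> A}) : {ffun 'I_n -> A} :=
  odflt a [pick b in Abar | prof tp b == prof tp a].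

Lemma rep_spec a : rep a \in Abar /\ prof tp (rep a) = prof tp a.
Proof.
rewrite /rep; case: pickP => [b /andP[b_Abar /eqP //]|none].
have : #|[set b in Abar | prof tp b == prof tp a]| != 0%N by rewrite Abar_rep.
by rewrite cards_eq0 => /set0Pn[b]; rewrite inE none.
Qed.

Definition rep_perm (a : {ffun 'I_n -> A}) : {perm 'I_n} :=
  odflt 1%g [pick p : {perm 'I_n} |
               [forall i, tp (p i) == tp i] && (a == [ffun i => rep a (p i)])].

Lemma rep_perm_spec a :
  (forall i, tp (rep_perm a i) = tp i) /\ [ffun i => rep a (rep_perm a i)] = a.
Proof.
rewrite /rep_perm; case: pickP => [p /andP[/forallP tp_p /eqP a_p]|none] /=.
  by split=> // i; apply/eqP.
have [p tp_p a_p] := prof_eq_perm (esym (proj2 (rep_spec a))).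
have /negP[] := none p; rewrite -a_p eqxx andbT.
by apply/forallP => i; rewrite tp_p.
Qed.

End Representatives.

Section Posterior.

Variables (R : realFieldType) (Omega : finType) (n : nat) (A : finType).
Variables (S : eqType) (sigma : Omega -> msig n A S -> R).
Variable supp : seq (msig n A S).

Definition signal_mass (i : 'I_n) (s : msig n A S) (w : Omega) : R :=
  \sum_(x <- supp | (x.1 == s.1) && (x.2 i == s.2 i)) sigma w x.

(* Agent [i] observes the whole joint action, so its posterior is
   concentrated on [s.1]. *)
Lemma posterior_expectation (mu : Omega -> R) i s
    (h : {ffun 'I_n -> A} -> Omega -> R) :
  \sum_(at_ : {ffun 'I_n -> A}) \sum_w posterior mu sigma supp i s at_ w * h at_ w
  = \sum_w mu w * signal_mass i s w / (\sum_w' mu w' * signal_mass i s w')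
           * h s.1 w.
Proof.
rewrite (bigD1 s.1) //= [X in _ + X]big1 ?addr0 => [|at_ at_s].
  apply: eq_bigr => w _; rewrite /posterior /signal_mass.
  by congr (_ * _ / _ * _); apply: eq_bigl => x; rewrite andbA andbb.
apply: big1 => w _; rewrite /posterior big_pred0 ?mulr0 ?mul0r // => x.
by apply/negbTE; case: eqP => //= ->; rewrite (negbTE at_s).
Qed.

End Posterior.

Lemma posterior_expectation_eq (R : realFieldType) (Omega : finType)
    (mu : Omega -> R) (n : nat) (A : finType) (S1 S2 : eqType)
    (sigma1 : Omega -> msig n A S1 -> R) (supp1 : seq (msig n A S1))
    (sigma2 : Omega -> msig n A S2 -> R) (supp2 : seq (msig n A S2))
    i1 i2 s1 s2 (h1 h2 : {ffun 'I_n -> A} -> Omega -> R) :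
  (forall w, signal_mass sigma1 supp1 i1 s1 w = signal_mass sigma2 supp2 i2 s2 w) ->
  (forall w, h1 s1.1 w = h2 s2.1 w) ->
  \sum_at_ \sum_w posterior mu sigma1 supp1 i1 s1 at_ w * h1 at_ w =
  \sum_at_ \sum_w posterior mu sigma2 supp2 i2 s2 at_ w * h2 at_ w.
Proof.
move=> eq_mass eq_h; rewrite !posterior_expectation.
apply: eq_bigr => w _; rewrite eq_mass eq_h; congr (_ / _ * _).
by apply: eq_bigr => w' _; rewrite eq_mass.
Qed.

Section Pushforward.

Variables (R : realFieldType) (Omega : finType) (n : nat) (A : finType).
Variables (S S' : eqType) (f : msig n A S -> msig n A S').
Hypothesis f_inj : injective f.
Variables (sigma : Omega -> msig n A S -> R) (supp : seq (msig n A S)).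

Definition push (w : Omega) (s' : msig n A S') : R :=
  \sum_(s <- supp | f s == s') sigma w s.

Definition push_supp : seq (msig n A S') := undup (map f supp).

Lemma push_f w s : uniq supp -> s \in supp -> push w (f s) = sigma w s.
Proof.
move=> supp_uniq s_supp; rewrite /push (eq_bigl (pred1 s)) => [|x]; last first.
  by rewrite /= (inj_eq f_inj).
by rewrite -big_filter filter_pred1_uniq // big_seq1.
Qed.

Lemma push_suppE : uniq supp -> push_supp = map f supp.
Proof. by move=> supp_uniq; rewrite /push_supp undup_id // map_inj_uniq. Qed.

Lemma push_neq0 w s' : push w s' != 0 -> exists2 s, s \in supp & s' = f s.
Proof.
have [/hasP[s s_supp /eqP <-]|/hasPn not_f] := boolP (has (fun s => f s == s') supp).
  by exists s.
rewrite /push big1_seq ?eqxx // => s /andP[/eqP fs s_supp].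
by have := not_f s s_supp; rewrite fs eqxx.
Qed.

Lemma policy_push : policy sigma supp -> policy push push_supp.
Proof.
move=> sigma_pol w; have [supp_uniq sigma_ge0 _ sigma_sum] := sigma_pol w; split.
- exact: undup_uniq.
- by move=> s'; apply: sumr_ge0 => s _; apply: sigma_ge0.
- by move=> s' /push_neq0[s s_supp ->]; rewrite mem_undup map_f.
- by rewrite push_suppE // big_map -sigma_sum; apply: eq_big_seq => s; apply: push_f.
Qed.

Lemma principal_util_push (T : finType) (tp : 'I_n -> T)
    (u0 : {ffun T * A -> nat} -> Omega -> R) (mu : Omega -> R) :
  policy sigma supp -> (forall s, prof tp (f s).1 = prof tp s.1) ->
  principal_util tp u0 mu push push_supp = principal_util tp u0 mu sigma supp.
Proof.
move=> sigma_pol prof_f; apply: eq_bigr => w _; congr (_ * _).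
have [supp_uniq _ _ _] := sigma_pol w.
by rewrite push_suppE // big_map; apply: eq_big_seq => s s_supp; rewrite push_f ?prof_f.
Qed.

Lemma signal_mass_push i j s w :
  uniq supp ->
  (forall x, ((f x).1 == (f s).1) && ((f x).2 j == (f s).2 j)
             = (x.1 == s.1) && (x.2 i == s.2 i)) ->
  signal_mass push push_supp j (f s) w = signal_mass sigma supp i s w.
Proof.
move=> supp_uniq f_obs; rewrite /signal_mass push_suppE // big_map.
rewrite big_seq_cond [RHS]big_seq_cond; apply: eq_big => x; first by rewrite f_obs.
by case/andP=> x_supp _; apply: push_f.
Qed.

End Pushforward.

Section Relabelling.

Variables (n : nat) (A T : finType) (tp : 'I_n -> T).
Variable Abar : {set {ffun 'I_n -> A}}.
Hypothesis Abar_rep : representative tp Abar.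
Variable S : eqType.

Local Notation p_ a := (rep_perm tp Abar a).

Definition relabel (s : msig n A S) : msig n A ({ffun 'I_n -> A} * S) :=
  (rep tp Abar s.1, [ffun j => (s.1, s.2 ((p_ s.1)^-1 j)%g)]).

Lemma relabel_inj : injective relabel.
Proof.
move=> [a g] [b h] /= [_ /ffunP eq_sig].
have eq_ab : a = b.
  by apply/ffunP => k; have := eq_sig k; rewrite !ffunE => -[->].
subst b; congr (_, _); apply/ffunP => k.
by have := eq_sig (p_ a k); rewrite !ffunE permK => -[].
Qed.

Lemma relabel_in s : (relabel s).1 \in Abar.
Proof. exact: (proj1 (rep_spec Abar_rep s.1)). Qed.

Lemma prof_relabel s : prof tp (relabel s).1 = prof tp s.1.
Proof. exact: (proj2 (rep_spec Abar_rep s.1)). Qed.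

Lemma relabel_observation s i x :
  ((relabel x).1 == (relabel s).1) && ((relabel x).2 (p_ s.1 i) == (relabel s).2 (p_ s.1 i))
  = (x.1 == s.1) && (x.2 i == s.2 i).
Proof.
rewrite /= !ffunE permK xpair_eqE.
by case: (eqVneq x.1 s.1) => [-> | _]; rewrite ?permK ?eqxx ?andbF.
Qed.

Lemma relabel_deviation_gain (R : realFieldType) (Omega : finType)
    (u : T -> A -> {ffun T * A -> nat} -> Omega -> R) s Np a' i w :
  let p := p_ s.1 in
  util tp u (p i) (replace (relabel s).1 Np a') w - util tp u (p i) (relabel s).1 w
  = util tp u i (replace s.1 (p @^-1: Np) [ffun k => a' (p k)]) w - util tp u i s.1 w.
Proof.
have [tp_p rep_p] := rep_perm_spec Abar_rep s.1.
by rewrite /= !util_perm // replace_perm rep_p.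
Qed.

Lemma stable_relabel (R : realFieldType) (Omega : finType)
    (u : T -> A -> {ffun T * A -> nat} -> Omega -> R) (mu : Omega -> R) (d : nat)
    (sigma : Omega -> msig n A S -> R) (supp : seq (msig n A S)) s :
  uniq supp -> stable tp u mu d sigma supp s ->
  stable tp u mu d (push relabel sigma supp) (push_supp relabel supp) (relabel s).
Proof.
move=> supp_uniq s_stable [Np [a' [Np_neq0 Np_le_d gain]]]; apply: s_stable.
have p_inj := @perm_inj _ (p_ s.1).
exists (p_ s.1 @^-1: Np), [ffun k => a' (p_ s.1 k)].
split=> [||i].
- by rewrite -card_gt0 card_preimset // card_gt0.
- by rewrite card_preimset.
rewrite inE => pi_Np; apply: lt_le_trans (gain _ pi_Np) _.
rewrite le_eqVlt; apply/orP; left; apply/eqP.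
apply: posterior_expectation_eq => w; last exact: relabel_deviation_gain.
by apply: signal_mass_push => //; [exact: relabel_inj | exact: relabel_observation].
Qed.

Lemma stable_policy_relabel (R : realFieldType) (Omega : finType)
    (u : T -> A -> {ffun T * A -> nat} -> Omega -> R) (mu : Omega -> R) (d : nat)
    (sigma : Omega -> msig n A S -> R) (supp : seq (msig n A S)) :
  policy sigma supp -> stable_policy tp u mu d sigma supp ->
  stable_policy tp u mu d (push relabel sigma supp) (push_supp relabel supp).
Proof.
move=> sigma_pol sigma_stable s'; rewrite mem_undup => /mapP[s s_supp ->] mass_gt0.
have [w0 _ | Omega0] := pickP (@predT Omega); last first.
  by move: mass_gt0; rewrite big_pred0 ?ltxx.
have [supp_uniq _ _ _] := sigma_pol w0.
apply: stable_relabel => //; apply: sigma_stable => //.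
rewrite (eq_bigr (fun w => mu w * push relabel sigma supp w (relabel s))) // => w _.
by rewrite push_f //; apply: relabel_inj.
Qed.

End Relabelling.

Theorem lemma4 (R : realFieldType) (Omega : finType) (mu : Omega -> R)
  (n : nat) (A T : finType) (tp : 'I_n -> T)
  (u : T -> A -> {ffun T * A -> nat} -> Omega -> R)
  (u0 : {ffun T * A -> nat} -> Omega -> R) (d : nat)
  (Abar : {set {ffun 'I_n -> A}}) :
  is_prior mu ->
  (forall t : T, exists i : 'I_n, tp i = t) ->
  (1 <= d)%N ->
  representative tp Abar ->
  forall (S : eqType) (sigma : Omega -> msig n A S -> R)
         (supp : seq (msig n A S)),
  policy sigma supp ->
  stable_policy tp u mu d sigma supp ->
  exists (S' : eqType) (sigma' : Omega -> msig n A S' -> R)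
         (supp' : seq (msig n A S')),
    [/\ policy sigma' supp',
        forall w s, sigma' w s != 0 -> s.1 \in Abar,
        stable_policy tp u mu d sigma' supp',
        principal_util tp u0 mu sigma supp <= principal_util tp u0 mu sigma' supp'
      & principal_util tp u0 mu sigma' supp' = principal_util tp u0 mu sigma supp].
Proof.
move=> _ _ _ Abar_rep S sigma supp sigma_pol sigma_stable.
pose f := relabel tp Abar (S := S).
have f_inj : injective f := relabel_inj (S := S).
have u0_eq := principal_util_push f_inj u0 mu sigma_pol (prof_relabel Abar_rep (S := S)).
exists _, (push f sigma supp), (push_supp f supp).
split=> //; last by rewrite u0_eq.
- exact: policy_push.
- by move=> w _ /push_neq0[s _ ->]; apply: relabel_in.
- exact: stable_policy_relabel.
Qed.
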